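(* For the unit-range normalization, there is an absolute constant $C>0$ such that for every $n\ge1$ and every truthful-in-expectation mechanism $J$ on $n$ agents and $n$ items, $ar(J)\le C/\sqrt n$. (Explicitly, $ar(J)\le 16/\sqrt n$.)
   Context: Agents $N=\{1,\dots,n\}$, items $M=\{1,\dots,n\}$, outcomes are bijections $\mu$ ($O$ the set of outcomes). Unit-range valuation functions: injective $u_i:M\to\mathbb R$ with $\max_j u_i(j)=1$, $\min_j u_i(j)=0$; $V$ the set of these, $V^n$ the set of profiles. A (randomized) mechanism $J$ maps each profile to a distribution over $O$; $J(\mathbf u)_i$ is agent $i$'s random item. $J$ is truthful-in-expectation if for all $i$, $\mathbf u=(u_i,u_{-i})\in V^n$, $\tilde u_i\in V$: $\mathbb E[u_i(J(u_i,u_{-i})_i)]\ge\mathbb E[u_i(J(\tilde u_i,u_{-i})_i)]$. $ar(J)=\inf_{\mathbf u\in V^n}\mathbb E[\sum_i u_i(J(\mathbf u)_i)]/\max_{\mu\in O}\sum_i u_i(\mu_i)$. *)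

From Stdlib Require Import Reals.
From mathcomp Require Import all_boot all_fingroup.
Set Implicit Arguments. Unset Strict Implicit. Unset Printing Implicit Defensive.

Local Open Scope R_scope.

Definition valuation (n : nat) := 'I_n -> R.
Definition profile (n : nat) := 'I_n -> valuation n.
(* Outcomes: bijections agents -> items; (s i) is the item of agent i. *)
Definition outcome (n : nat) := {perm 'I_n}.

Definition unit_range (n : nat) (u : valuation n) : Prop :=
  injective u /\
  (exists j, u j = 1) /\ (exists j, u j = 0) /\
  (forall j, 0 <= u j <= 1).

Definition in_Vn (n : nat) (u : profile n) : Prop := forall i, unit_range (u i).

Definition mechanism (n : nat) := profile n -> outcome n -> R.

Definition sumR (n : nat) (f : outcome n -> R) : R :=
  \big[Rplus/0]_(s : outcome n) f s.

Definition is_mechanism (n : nat) (J : mechanism n) : Prop :=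
  forall u : profile n, in_Vn u ->
    (forall s, 0 <= J u s) /\ sumR (fun s => J u s) = 1.

Definition update (n : nat) (u : profile n) (i : 'I_n) (w : valuation n)
  : profile n := fun k => if k == i then w else u k.

(* Expected value to (true valuation) ui of agent i's random item under J v. *)
Definition exp_util (n : nat) (J : mechanism n) (v : profile n) (i : 'I_n)
  (ui : valuation n) : R :=
  sumR (fun s => J v s * ui (s i)).

Definition truthful_in_expectation (n : nat) (J : mechanism n) : Prop :=
  forall (i : 'I_n) (u : profile n) (w : valuation n),
    in_Vn u -> unit_range w ->
    exp_util J (update u i w) i (u i) <= exp_util J u i (u i).

Definition welfare (n : nat) (u : profile n) (s : outcome n) : R :=
  \big[Rplus/0]_(i : 'I_n) u i (s i).

Definition exp_welfare (n : nat) (J : mechanism n) (u : profile n) : R :=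
  sumR (fun s => J u s * welfare u s).

(* max over outcomes (welfare values are nonnegative on V^n, and outcomes
   exist, so folding Rmax from 0 gives the maximum). *)
Definition opt_welfare (n : nat) (u : profile n) : R :=
  \big[Rmax/0]_(s : outcome n) welfare u s.

Definition ratio (n : nat) (J : mechanism n) (u : profile n) : R :=
  exp_welfare J u / opt_welfare u.

(* ar(J) <= c, with ar(J) = inf_{u in V^n} ratio J u, written out:
   for every eps > 0 some profile in V^n has ratio < c + eps. *)
Definition ar_le (n : nat) (J : mechanism n) (c : R) : Prop :=
  forall eps : R, 0 < eps -> exists u : profile n, in_Vn u /\ ratio J u < c + eps.

(* Let k = floor(sqrt n).  Averaging a mechanism over all relabelings of the
   agents keeps it truthful and keeps its worst-case ratio, and makes it
   anonymous.  In the hard profile, 2k focused agents want one of the items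
   1..k each (two agents per item), while the other n - 2k agents value the
   item k+1 at 1 and the items 1..k at 1/k.  The optimum is at least k, so a
   ratio r forces the focused agents to get their targets with total
   probability at least r k - 3, and some focused agent o gets its target with
   probability p >= (r k - 3) / 2k.  If o reported the spread valuation
   instead, the n - 2k + 1 identical spread agents would share a total utility
   of at most 3 equally, while truthfulness of o gives it at least p / k.
   Hence r k - 3 <= 6 k^2 / (n - 2k + 1), which fails for r = 16 / sqrt n once
   k >= 16; for smaller n the trivial bound ratio <= 1 suffices. *)

From HB Require Import structures.
From Stdlib Require Import Reals Lra Lia FunctionalExtensionality Classical.
From mathcomp Require Import all_boot all_fingroup zify.
Set Implicit Arguments. Unset Strict Implicit. Unset Printing Implicit Defensive.
Local Open Scope R_scope.

Lemma Rplus_associative : associative Rplus.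
Proof. by move=> *; rewrite Rplus_assoc. Qed.
HB.instance Definition _ :=
  Monoid.isComLaw.Build R 0 Rplus Rplus_associative Rplus_comm Rplus_0_l.
HB.instance Definition _ := Monoid.isMulLaw.Build R 0 Rmult Rmult_0_l Rmult_0_r.
HB.instance Definition _ :=
  Monoid.isAddLaw.Build R Rmult Rplus Rmult_plus_distr_r Rmult_plus_distr_l.

Lemma Rmax_associative : associative Rmax.
Proof. by move=> *; rewrite Rmax_assoc. Qed.
HB.instance Definition _ :=
  SemiGroup.isComLaw.Build R Rmax Rmax_associative Rmax_comm.

Section RealSums.
Variable T : finType.
Implicit Types (P : pred T) (F G : T -> R).

Lemma Rsum_le P F G : (forall i, P i -> F i <= G i) ->
  \big[Rplus/0]_(i | P i) F i <= \big[Rplus/0]_(i | P i) G i.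
Proof. by move=> le_FG; apply: big_ind2 => [|*|i /le_FG]; lra. Qed.

Lemma Rsum_ge0 P F : (forall i, P i -> 0 <= F i) -> 0 <= \big[Rplus/0]_(i | P i) F i.
Proof. by move=> F_ge0; apply: big_ind => [|*|i /F_ge0]; lra. Qed.

Lemma Rsum_sub_le P F : (forall i, 0 <= F i) ->
  \big[Rplus/0]_(i | P i) F i <= \big[Rplus/0]_i F i.
Proof.
move=> F_ge0; rewrite [X in _ <= X](bigID P) /=.
have : 0 <= \big[Rplus/0]_(i | ~~ P i) F i by apply: Rsum_ge0.
lra.
Qed.

Lemma Rsum_ge_term F j : (forall i, 0 <= F i) -> F j <= \big[Rplus/0]_i F i.
Proof.
move=> F_ge0; rewrite (bigD1 j) //=.
have : 0 <= \big[Rplus/0]_(i | i != j) F i by apply: Rsum_ge0.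
lra.
Qed.

Lemma Rsum_lt P F G j : P j -> (forall i, P i -> F i <= G i) -> F j < G j ->
  \big[Rplus/0]_(i | P i) F i < \big[Rplus/0]_(i | P i) G i.
Proof.
move=> Pj le_FG lt_FGj; rewrite !(bigD1 j Pj) /=.
have : \big[Rplus/0]_(i | P i && (i != j)) F i <= \big[Rplus/0]_(i | P i && (i != j)) G i.
  by apply: Rsum_le => i /andP[Pi _]; apply: le_FG.
lra.
Qed.

Lemma Rsum_const (A : {pred T}) c : \big[Rplus/0]_(i in A) c = INR #|A| * c.
Proof.
rewrite big_const; elim: #|A| => [|m IHm]; first by rewrite /=; lra.
by rewrite iterS IHm S_INR; lra.
Qed.

Lemma Rsum_const_card c : \big[Rplus/0]_(i : T) c = INR #|T| * c.
Proof. by rewrite Rsum_const. Qed.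

Lemma Rsum_indicator P c :
  \big[Rplus/0]_(i : T) (if P i then c else 0) = INR #|P| * c.
Proof. by rewrite -big_mkcond Rsum_const. Qed.

Lemma exists_ge_average P F : (0 < #|P|)%N ->
  exists2 i, P i & \big[Rplus/0]_(j | P j) F j <= INR #|P| * F i.
Proof.
case/card_gt0P=> j Pj; apply: NNPP => no_i.
have lt_avg i : P i -> INR #|P| * F i < \big[Rplus/0]_(j | P j) F j.
  by move=> Pi; apply: Rnot_le_lt => le_i; apply: no_i; exists i.
have := Rsum_lt Pj (fun i Pi => Rlt_le _ _ (lt_avg i Pi)) (lt_avg j Pj).
by rewrite -big_distrr /= Rsum_const; lra.
Qed.

Lemma Rmax_big_ge F j : F j <= \big[Rmax/0]_(i : T) F i.
Proof. by rewrite (bigD1 j) //=; apply: Rmax_l. Qed.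
End RealSums.

Lemma Rsum_perm n (F : 'I_n -> R) (s : {perm 'I_n}) :
  \big[Rplus/0]_(i : 'I_n) F (s i) = \big[Rplus/0]_(j : 'I_n) F j.
Proof. by rewrite [RHS](reindex_inj (@perm_inj _ s)). Qed.

Lemma card_ord_interval n a b : (a <= b <= n)%N ->
  #|(fun i : 'I_n => (a <= i < b)%N)| = (b - a)%N.
Proof.
case/andP=> le_ab le_bn; rewrite -sum1_card.
rewrite (eq_bigl (fun i : 'I_n => (i < b) && (a <= i))%N); last first.
  by move=> i; rewrite unfold_in andbC.
rewrite -(big_geq_mkord a n (fun i => i < b)%N (fun _ => 1%N)).
by rewrite -(big_nat_widen a b n xpredT) // sum_nat_const_nat muln1.
Qed.

Lemma in_Vn_update n (u : profile n) i w : in_Vn u -> unit_range w -> in_Vn (update u i w).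
Proof. by move=> Vu Vw j; rewrite /update; case: eqP. Qed.

Lemma update_same n (u : profile n) i w : update (update u i w) i (u i) = u.
Proof. by apply: functional_extensionality => j; rewrite /update; case: eqP => [->|]. Qed.

Section Symmetrization.
Variable n : nat.
Implicit Types (J : mechanism n) (u : profile n) (σ s : {perm 'I_n}).

Definition relabel u σ : profile n := fun i => u (σ i).

(* In [relabel u σ] agent [i] reports [u (σ i)], and the outcome [σ * s] hands
   it the item [s (σ i)]: every report receives the same item as under [s]. *)
Definition symmetrize J : mechanism n :=
  fun u s => / INR #|{perm 'I_n}| * \big[Rplus/0]_σ J (relabel u σ) (σ * s)%g.

Lemma card_perm_gt0 : 0 < INR #|{perm 'I_n}|.
Proof. by apply: lt_0_INR; apply/ltP/card_gt0P; exists 1%g. Qed.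

Lemma in_Vn_relabel u σ : in_Vn u -> in_Vn (relabel u σ).
Proof. by move=> Vu i; apply: Vu. Qed.

Lemma Rsum_symmetrize J u (f : {perm 'I_n} -> R) :
  \big[Rplus/0]_s (symmetrize J u s * f s) = / INR #|{perm 'I_n}| *
    \big[Rplus/0]_σ \big[Rplus/0]_s (J (relabel u σ) s * f (σ^-1 * s)%g).
Proof.
under eq_bigr => s _ do rewrite /symmetrize Rmult_assoc big_distrl /=.
rewrite -big_distrr exchange_big /=; congr (_ * _); apply: eq_bigr => σ _.
rewrite [LHS](reindex_inj (mulgI σ^-1)%g) /=.
by apply: eq_bigr => s _; rewrite mulKVg.
Qed.

Lemma symmetrize_mechanism J : is_mechanism J -> is_mechanism (symmetrize J).
Proof.
move=> mechJ u Vu; have cardP := card_perm_gt0.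
have J_ge0 σ s : 0 <= J (relabel u σ) s.
  by have [J_ge0 _] := mechJ _ (in_Vn_relabel σ Vu).
have J_sum1 σ : sumR (J (relabel u σ)) = 1.
  by have [_ ->] := mechJ _ (in_Vn_relabel σ Vu).
split=> [s|].
  apply: Rmult_le_pos; first by apply: Rlt_le; apply: Rinv_0_lt_compat.
  by apply: Rsum_ge0 => σ _; apply: J_ge0.
have := Rsum_symmetrize J u (fun _ => 1); rewrite /sumR.
under eq_bigr => s _ do rewrite Rmult_1_r.
move=> ->; under eq_bigr => σ _ do under eq_bigr => s _ do rewrite Rmult_1_r.
rewrite (eq_bigr (fun _ => 1)) => [|σ _]; last exact: J_sum1.
rewrite Rsum_const Rmult_1_r Rinv_l //; exact: Rgt_not_eq.
Qed.

Lemma exp_util_symmetrize J u i (w : valuation n) :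
  exp_util (symmetrize J) u i w =
  / INR #|{perm 'I_n}| * \big[Rplus/0]_σ exp_util J (relabel u σ) (σ^-1 i)%g w.
Proof.
rewrite /exp_util /sumR Rsum_symmetrize; congr (_ * _).
by apply: eq_bigr => σ _; apply: eq_bigr => s _; rewrite permM.
Qed.

Lemma relabel_update u i w σ :
  relabel (update u i w) σ = update (relabel u σ) (σ^-1 i)%g w.
Proof.
apply: functional_extensionality => x; rewrite /relabel /update.
by rewrite -(inj_eq (@perm_inj _ σ^-1%g)) permK.
Qed.

Lemma symmetrize_truthful J :
  truthful_in_expectation J -> truthful_in_expectation (symmetrize J).
Proof.
move=> truthJ i u w Vu Vw; rewrite !exp_util_symmetrize.
apply: Rmult_le_compat_l.
  by apply: Rlt_le; apply: Rinv_0_lt_compat; apply: card_perm_gt0.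
apply: Rsum_le => σ _; rewrite relabel_update.
have -> : u i = relabel u σ (σ^-1 i)%g by rewrite /relabel permKV.
exact: truthJ (in_Vn_relabel σ Vu) Vw.
Qed.

Lemma welfare_relabel u σ s : welfare u (σ^-1 * s)%g = welfare (relabel u σ) s.
Proof.
rewrite /welfare [LHS](reindex_inj (@perm_inj _ σ)) /=.
by apply: eq_bigr => x _; rewrite permM permK.
Qed.

Lemma exp_welfare_symmetrize J u : exp_welfare (symmetrize J) u =
  / INR #|{perm 'I_n}| * \big[Rplus/0]_σ exp_welfare J (relabel u σ).
Proof.
rewrite /exp_welfare /sumR Rsum_symmetrize; congr (_ * _).
by apply: eq_bigr => σ _; apply: eq_bigr => s _; rewrite welfare_relabel.
Qed.

Lemma opt_welfare_relabel u σ : opt_welfare (relabel u σ) = opt_welfare u.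
Proof.
rewrite /opt_welfare [RHS](reindex_inj (mulgI σ^-1)%g) /=.
by apply: eq_bigr => s _; rewrite welfare_relabel.
Qed.

Lemma symmetrize_relabel J u τ s :
  symmetrize J (relabel u τ) (τ * s)%g = symmetrize J u s.
Proof.
rewrite /symmetrize; congr (_ * _).
rewrite [RHS](reindex_inj (mulIg τ)) /=; apply: eq_bigr => σ _.
have -> : relabel (relabel u τ) σ = relabel u (σ * τ)%g.
  by apply: functional_extensionality => x; rewrite /relabel permM.
by rewrite mulgA.
Qed.

Lemma exp_util_symmetrize_anonymous J u i j (w : valuation n) : u i = u j ->
  exp_util (symmetrize J) u i w = exp_util (symmetrize J) u j w.
Proof.
move=> eq_uij; set τ := tperm i j.
have fix_u : relabel u τ = u.
  apply: functional_extensionality => x; rewrite /relabel.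
  by case: tpermP => [->|->|] //; rewrite eq_uij.
rewrite /exp_util /sumR [RHS](reindex_inj (mulgI τ)) /=.
apply: eq_bigr => s _.
by rewrite -[in RHS]fix_u symmetrize_relabel permM tpermR.
Qed.
End Symmetrization.

Section Welfare.
Variable n : nat.
Implicit Types (J : mechanism n) (u : profile n).

Lemma sumR_mechanism_const J u c :
  is_mechanism J -> in_Vn u -> sumR (fun s => J u s * c) = c.
Proof.
move=> mechJ Vu; have [_ J_sum1] := mechJ u Vu.
have -> : sumR (fun s => J u s * c) = sumR (J u) * c by rewrite /sumR big_distrl.
by rewrite J_sum1 Rmult_1_l.
Qed.

Lemma Rsum_mechanism_le J u (f : outcome n -> R) c :
  is_mechanism J -> in_Vn u -> (forall s, f s <= c) -> sumR (fun s => J u s * f s) <= c.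
Proof.
move=> mechJ Vu le_fc; have [J_ge0 _] := mechJ u Vu.
rewrite -(sumR_mechanism_const c mechJ Vu).
by apply: Rsum_le => s _; apply: Rmult_le_compat_l.
Qed.

Lemma welfare_le_opt u s : welfare u s <= opt_welfare u.
Proof. exact: (Rmax_big_ge (welfare u)). Qed.

Lemma opt_welfare_gt0 u : (0 < n)%N -> in_Vn u -> 0 < opt_welfare u.
Proof.
move=> n_gt0 Vu; set i := Ordinal n_gt0.
have [_ [[j uij1] _]] := Vu i.
apply: Rlt_le_trans (welfare_le_opt u (tperm i j)).
have u_ge0 x : 0 <= u x (tperm i j x) by have [_ [_ [_ /(_ (tperm i j x))]]] := Vu x; lra.
apply: Rlt_le_trans (Rsum_ge_term i u_ge0); rewrite /= tpermL uij1; lra.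
Qed.

Lemma exp_welfare_le_opt J u : is_mechanism J -> in_Vn u ->
  exp_welfare J u <= opt_welfare u.
Proof. by move=> mechJ Vu; apply: Rsum_mechanism_le => // s; apply: welfare_le_opt. Qed.

Lemma ratio_le1 J u : (0 < n)%N -> is_mechanism J -> in_Vn u -> ratio J u <= 1.
Proof.
move=> n_gt0 mechJ Vu; have opt_gt0 := opt_welfare_gt0 n_gt0 Vu.
have := exp_welfare_le_opt mechJ Vu; rewrite /ratio => le_opt.
by apply: (Rmult_le_reg_r (opt_welfare u)); rewrite // /Rdiv Rmult_assoc Rinv_l; lra.
Qed.

Lemma symmetrize_welfare_ge J c u : (0 < n)%N ->
  (forall v, in_Vn v -> c <= ratio J v) -> in_Vn u ->
  c * opt_welfare u <= exp_welfare (symmetrize J) u.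
Proof.
move=> n_gt0 ratioJ Vu; have opt_gt0 := opt_welfare_gt0 n_gt0 Vu.
have cardP := card_perm_gt0 n.
have relabel_ge σ : c * opt_welfare u <= exp_welfare J (relabel u σ).
  have := ratioJ _ (in_Vn_relabel σ Vu); rewrite /ratio opt_welfare_relabel => le_c.
  have := Rmult_le_compat_r _ _ _ (Rlt_le _ _ opt_gt0) le_c.
  by rewrite /Rdiv Rmult_assoc Rinv_l ?Rmult_1_r //; lra.
rewrite exp_welfare_symmetrize.
apply: Rle_trans (Rmult_le_compat_l _ _ _ _ (Rsum_le (fun σ _ => relabel_ge σ))).
  by rewrite Rsum_const -Rmult_assoc Rinv_l ?Rmult_1_l //; lra.
by apply: Rlt_le; apply: Rinv_0_lt_compat.
Qed.

Lemma Rsum_exp_util_le J u (A : pred 'I_n) (w : valuation n) :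
  is_mechanism J -> in_Vn u -> (forall j, 0 <= w j) ->
  \big[Rplus/0]_(i | A i) exp_util J u i w <= \big[Rplus/0]_j w j.
Proof.
move=> mechJ Vu w_ge0; rewrite /exp_util /sumR exchange_big /=.
under eq_bigr => s _ do rewrite -big_distrr /=.
apply: Rsum_mechanism_le => // s.
by rewrite -(Rsum_perm w s); apply: Rsum_sub_le.
Qed.
End Welfare.

Section HardProfile.
Variables n k : nat.
Hypothesis k_ge2 : (2 <= k)%N.
Hypothesis n_large : (2 * k + 2 <= n)%N.
Implicit Types (i j : 'I_n) (s : outcome n).

(* A perturbation, zero on item 0 and below [/ n], making valuations injective. *)
Definition tiebreak (j : 'I_n) : R := INR j / (INR n * INR n).

Definition val_focused (g : nat) : valuation n :=
  fun j => if val j == g then 1 else tiebreak j.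

Definition val_spread : valuation n := fun j =>
  if val j == k.+1 then 1
  else if (1 <= j < k.+1)%N then / INR k + tiebreak j else tiebreak j.

(* Agents [1..2k] are focused: agents [g] and [g + k] both want item [g]. *)
Definition focused (i : 'I_n) : bool := (1 <= i < (2 * k).+1)%N.
Definition target (i : 'I_n) : nat := if (i <= k)%N then (i : nat) else (i - k)%N.

Definition hard_profile : profile n :=
  fun i => if focused i then val_focused (target i) else val_spread.

Lemma inv_n_le_inv_k : / INR n <= / INR k <= / 2.
Proof.
have k_ge : 2 <= INR k by apply: (le_INR 2); apply/leP.
have k_le_n : INR k <= INR n by apply: le_INR; apply/leP; lia.
by split; apply: Rinv_le_contravar; lra.
Qed.

Lemma tiebreak_bounds j : 0 <= tiebreak j < / INR n.
Proof.
have n_gt0 : 0 < INR n by apply: lt_0_INR; apply/ltP; lia.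
have j_lt_n : INR j < INR n by apply: lt_INR; apply/ltP.
rewrite /tiebreak; split.
  apply: Rmult_le_pos; [apply: pos_INR | apply: Rlt_le; apply: Rinv_0_lt_compat; nra].
apply: (Rmult_lt_reg_r (INR n * INR n)); first nra.
by rewrite /Rdiv Rmult_assoc Rinv_l; [field_simplify; lra | nra].
Qed.

Lemma tiebreak_inj : injective tiebreak.
Proof.
move=> x z; rewrite /tiebreak => eq_xz; apply: val_inj; apply: INR_eq.
have n_gt0 : 0 < INR n by apply: lt_0_INR; apply/ltP; lia.
have := f_equal (Rmult ^~ (INR n * INR n)) eq_xz.
by rewrite /Rdiv !Rmult_assoc Rinv_l ?Rmult_1_r //; nra.
Qed.

Lemma unit_range_val_focused g : (1 <= g < n)%N -> unit_range (val_focused g).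
Proof.
case/andP=> g_ge1 g_lt_n; have n_gt0 : (0 < n)%N by lia.
have tb := tiebreak_bounds; have [n_k k_2] := inv_n_le_inv_k.
split; [|split; [|split]].
- move=> x z; rewrite /val_focused.
  case: eqP => x_g; case: eqP => z_g.
  + by move=> _; apply: val_inj; rewrite x_g z_g.
  + by have := tb z; lra.
  + by have := tb x; lra.
  + exact: tiebreak_inj.
- by exists (Ordinal g_lt_n); rewrite /val_focused eqxx.
- exists (Ordinal n_gt0); rewrite /val_focused /=.
  by case: eqP => [|_]; [lia | rewrite /tiebreak /=; lra].
- by move=> j; rewrite /val_focused; case: eqP => _; [|have := tb j]; lra.
Qed.

Lemma unit_range_val_spread : unit_range val_spread.
Proof.
have n_gt0 : (0 < n)%N by lia.
have top_lt_n : (k.+1 < n)%N by lia.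
have tb := tiebreak_bounds; have [n_k k_2] := inv_n_le_inv_k.
split; [|split; [|split]].
- move=> x z; rewrite /val_spread; have tx := tb x; have tz := tb z.
  case: eqP => x_top; case: eqP => z_top.
  + by move=> _; apply: val_inj; rewrite x_top z_top.
  + by case: ifP => _; lra.
  + by case: ifP => _; lra.
  + case: ifP => _; case: ifP => _ eq_xz; try lra; apply: tiebreak_inj; lra.
- by exists (Ordinal top_lt_n); rewrite /val_spread eqxx.
- by exists (Ordinal n_gt0); rewrite /val_spread /tiebreak /=; lra.
- by move=> j; rewrite /val_spread; have := tb j; case: eqP => _; [|case: ifP => _]; lra.
Qed.

Lemma target_range i : focused i -> (1 <= target i < k.+1)%N.
Proof. by rewrite /focused /target => /andP[? ?]; case: ifP => ?; apply/andP; split; lia. Qed.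

Lemma in_Vn_hard_profile : in_Vn hard_profile.
Proof.
move=> i; rewrite /hard_profile; case: ifP => [/target_range ? |_].
  by apply: unit_range_val_focused; lia.
exact: unit_range_val_spread.
Qed.

Lemma card_focused : #|focused| = (2 * k)%N.
Proof. by rewrite card_ord_interval; lia. Qed.

Definition spread_cap (j : 'I_n) : R :=
  (if (k.+1 <= j < k.+2)%N then 1 else 0) +
  (if (1 <= j < k.+1)%N then / INR k else 0) + / INR n.

Lemma Rsum_spread_cap : \big[Rplus/0]_j spread_cap j = 3.
Proof.
rewrite /spread_cap !big_split /= !Rsum_indicator Rsum_const_card card_ord.
rewrite !card_ord_interval ?subSS ?subSnn ?subn0 /=; try lia.
have [k_pos n_pos] : 0 < INR k /\ 0 < INR n by split; apply: lt_0_INR; apply/ltP; lia.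
by field; lra.
Qed.

Lemma val_spread_ge0 j : 0 <= val_spread j.
Proof. by have [_ [_ [_ /(_ j)]]] := unit_range_val_spread; lra. Qed.

Lemma val_spread_le_cap j : val_spread j <= spread_cap j.
Proof.
have [tb0 tb1] := tiebreak_bounds j.
rewrite /val_spread /spread_cap; case: eqP => [top|_].
  by rewrite top leqnn ltnSn ltnn andbF /=; lra.
by case: ifP => _; case: ifP => _; lra.
Qed.

Definition hits_target (i : 'I_n) (s : outcome n) : bool :=
  focused i && (val (s i) == target i).

Lemma hard_profile_le_cap i s :
  hard_profile i (s i) <= (if hits_target i s then 1 else 0) + spread_cap (s i).
Proof.
have cap_ge0 : 0 <= spread_cap (s i).
  by apply: Rle_trans (val_spread_le_cap _); apply: val_spread_ge0.
rewrite /hard_profile /hits_target; case: ifP => _ /=; last first.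
  by have := val_spread_le_cap (s i); lra.
rewrite /val_focused; case: eqP => _; first lra.
have [tb0 tb1] := tiebreak_bounds (s i); have [n_k _] := inv_n_le_inv_k.
have : / INR n <= spread_cap (s i) by rewrite /spread_cap; do 2 case: ifP => _; lra.
lra.
Qed.

Lemma welfare_hard_profile_le s : welfare hard_profile s <=
  \big[Rplus/0]_i (if hits_target i s then 1 else 0) + 3.
Proof.
rewrite /welfare -Rsum_spread_cap -(Rsum_perm spread_cap s) -big_split /=.
by apply: Rsum_le => i _; apply: hard_profile_le_cap.
Qed.

Lemma opt_welfare_hard_profile : INR k <= opt_welfare hard_profile.
Proof.
apply: Rle_trans (welfare_le_opt hard_profile 1%g).
have -> : INR k = \big[Rplus/0]_(i : 'I_n) (if (1 <= i < k.+1)%N then 1 else 0).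
  by rewrite Rsum_indicator card_ord_interval ?subSS ?subn0 ?Rmult_1_r //; lia.
apply: Rsum_le => i _; rewrite perm1; case: ifP => i_le_k.
  have focused_i : focused i by rewrite /focused; lia.
  have target_i : target i = i by rewrite /target; case: ifP => //; lia.
  by rewrite /hard_profile focused_i target_i /val_focused eqxx; lra.
by have [_ [_ [_ /(_ i)]]] := in_Vn_hard_profile i; lra.
Qed.

Section Deviation.
Variable J : mechanism n.
Hypothesis mechJ : is_mechanism J.
Hypothesis truthJ : truthful_in_expectation J.

Definition target_prob i : R :=
  \big[Rplus/0]_s (symmetrize J hard_profile s * if hits_target i s then 1 else 0).

Lemma exp_welfare_hard_profile_le :
  exp_welfare (symmetrize J) hard_profile <= \big[Rplus/0]_i target_prob i + 3.
Proof.
have [Js_ge0 _] := symmetrize_mechanism mechJ in_Vn_hard_profile.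
apply: Rle_trans (Rsum_le (fun s _ => Rmult_le_compat_l _ _ _ (Js_ge0 s)
  (welfare_hard_profile_le s))) _.
under eq_bigr => s _ do rewrite Rmult_plus_distr_l big_distrr /=.
rewrite big_split /= exchange_big /=.
have -> : \big[Rplus/0]_s (symmetrize J hard_profile s * 3) = 3.
  exact: sumR_mechanism_const (symmetrize_mechanism mechJ) in_Vn_hard_profile.
exact: Rle_refl.
Qed.

Lemma exists_focused_ge_average : exists2 o, focused o &
  \big[Rplus/0]_i target_prob i <= 2 * INR k * target_prob o.
Proof.
rewrite (bigID focused) /= [X in _ + X]big1 => [|i /negbTE unfocused]; last first.
  by apply: big1 => s _; rewrite /hits_target unfocused Rmult_0_r.
have [|o focused_o avg_o] := exists_ge_average (P := focused) target_prob.
  by rewrite card_focused; lia.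
exists o => //; rewrite Rplus_0_r; move: avg_o; rewrite card_focused mult_INR /=; lra.
Qed.

Lemma deviation_gain o : focused o -> / INR k * target_prob o <=
  exp_util (symmetrize J) (update hard_profile o val_spread) o val_spread.
Proof.
move=> focused_o.
have V_dev := in_Vn_update o in_Vn_hard_profile unit_range_val_spread.
have := symmetrize_truthful truthJ o V_dev (in_Vn_hard_profile o).
have dev_o : update hard_profile o val_spread o = val_spread by rewrite /update eqxx.
rewrite update_same dev_o; apply: Rle_trans.
have [Js_ge0 _] := symmetrize_mechanism mechJ in_Vn_hard_profile.
rewrite /target_prob /exp_util /sumR big_distrr /=; apply: Rsum_le => s _.
have := Js_ge0 s; rewrite /hits_target focused_o /=; case: eqP => [hit|_] Js0; last first.
  by have := val_spread_ge0 (s o); nra.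
have := target_range focused_o; rewrite -hit => target_o.
rewrite /val_spread target_o; case: eqP => [top|_]; first by rewrite top ltnn andbF in target_o.
by have [tb0 _] := tiebreak_bounds (s o); nra.
Qed.

Lemma spread_share o : focused o -> (INR n - 2 * INR k + 1) *
  exp_util (symmetrize J) (update hard_profile o val_spread) o val_spread <= 3.
Proof.
move=> focused_o; set dev := update hard_profile o val_spread.
have V_dev : in_Vn dev := in_Vn_update o in_Vn_hard_profile unit_range_val_spread.
set A := [predU1 o & [predC focused]].
have dev_A i : A i -> dev i = dev o.
  rewrite /dev /update eqxx => /predU1P [-> | ]; first by rewrite eqxx.
  rewrite inE => /negbTE unfocused.
  by rewrite /hard_profile -[focused i]/(i \in focused) unfocused; case: eqP.
have card_A : INR #|A| = INR n - 2 * INR k + 1.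
  have o_in : o \in focused := focused_o.
  rewrite cardU1 !inE negbK o_in; have := cardC focused.
  rewrite card_ord card_focused => /(f_equal INR).
  set m := #|[predC focused]|; rewrite add1n S_INR plus_INR mult_INR /=; lra.
have := Rsum_exp_util_le A (symmetrize_mechanism mechJ) V_dev val_spread_ge0.
rewrite (eq_bigr (fun _ => exp_util (symmetrize J) dev o val_spread)); last first.
  by move=> i /dev_A dev_io; apply: exp_util_symmetrize_anonymous.
rewrite Rsum_const card_A => share.
apply: Rle_trans share _; rewrite -Rsum_spread_cap.
by apply: Rsum_le => j _; apply: val_spread_le_cap.
Qed.

Lemma truthful_ratio_bound c : 0 <= c -> (forall v, in_Vn v -> c <= ratio J v) ->
  c * INR k - 3 <= 6 * (INR k * INR k) / (INR n - 2 * INR k + 1).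
Proof.
move=> c_ge0 ratioJ; have n_gt0 : (0 < n)%N by lia.
have k_ge2R : 2 <= INR k by apply: (le_INR 2); apply/leP.
have D_gt0 : 0 < INR n - 2 * INR k + 1.
  by have := le_INR _ _ (elimT leP n_large); rewrite plus_INR mult_INR /=; lra.
set D := INR n - 2 * INR k + 1 in D_gt0 *.
have welfare_S : c * INR k <= \big[Rplus/0]_i target_prob i + 3.
  have := symmetrize_welfare_ge n_gt0 ratioJ in_Vn_hard_profile.
  have := exp_welfare_hard_profile_le; have := opt_welfare_hard_profile; nra.
have [o focused_o S_le] := exists_focused_ge_average.
have gain := deviation_gain focused_o; have share := spread_share focused_o.
set U := exp_util _ _ o _ in gain share; rewrite -/D in share.
have p_le : target_prob o <= INR k * U.
  have -> : target_prob o = INR k * (/ INR k * target_prob o) by field; lra.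
  by apply: Rmult_le_compat_l; lra.
have S_le_div : \big[Rplus/0]_i target_prob i <= 6 * (INR k * INR k) / D.
  apply: (Rmult_le_reg_r D) => //; rewrite /Rdiv Rmult_assoc Rinv_l ?Rmult_1_r; last lra.
  have pD : target_prob o * D <= 3 * INR k by nra.
  nra.
lra.
Qed.
End Deviation.
End HardProfile.

Lemma hard_gap (K N : R) : 16 <= K -> K * K <= N -> sqrt N < K + 1 ->
  6 * (K * K) / (N - 2 * K + 1) < 16 / sqrt N * K - 3.
Proof.
move=> K_ge K2_le sqrt_lt.
have sqrt_gt0 : 0 < sqrt N by apply: sqrt_lt_R0; nra.
have K_le_sqrt : K <= sqrt N.
  by rewrite -(sqrt_square K); [exact: sqrt_le_1_alt | lra].
set r := 16 / sqrt N.
have r_sqrt : r * sqrt N = 16 by rewrite /r; field; lra.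
have r_le1 : r <= 1 by nra.
have rK1 : 16 < r * (K + 1) by nra.
set D := N - 2 * K + 1.
have D_ge : (K - 1) * (K - 1) <= D by rewrite /D; nra.
apply: (Rmult_lt_reg_r D); first nra.
rewrite /Rdiv Rmult_assoc Rinv_l ?Rmult_1_r; last nra.
have tK1 : 13 * K - 3 < (r * K - 3) * (K + 1) by nra.
have t_gt0 : 0 < r * K - 3 by nra.
have cubic : 6 * (K * K) * (K + 1) <= (13 * K - 3) * ((K - 1) * (K - 1)).
  have : 0 <= (K - 16) * (K * K) by apply: Rmult_le_pos; nra.
  nra.
have : (13 * K - 3) * ((K - 1) * (K - 1)) < (r * K - 3) * (K + 1) * D.
  apply: Rlt_le_trans (Rmult_le_compat_l _ _ _ _ D_ge); last nra.
  by apply: Rmult_lt_compat_r; nra.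
nra.
Qed.

Lemma exists_in_Vn n : (2 <= n)%N -> exists u : profile n, in_Vn u.
Proof.
move=> n_ge2; have m_gt0 : 0 < INR n.-1 by apply: lt_0_INR; apply/ltP; lia.
have last_lt : (n.-1 < n)%N by lia.
exists (fun _ j => INR j / INR n.-1) => i; split; [|split; [|split]].
- move=> x z /= eq_xz; apply: val_inj; apply: INR_eq.
  have := f_equal (Rmult ^~ (INR n.-1)) eq_xz.
  by rewrite /Rdiv !Rmult_assoc Rinv_l ?Rmult_1_r //; lra.
- by exists (Ordinal last_lt); rewrite /=; field; lra.
- by exists (Ordinal (ltnW n_ge2)); rewrite /=; lra.
- move=> j; have j_ge0 := pos_INR j.
  have j_le : INR j <= INR n.-1 by apply: le_INR; apply/leP; have := ltn_ord j; lia.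
  split; first by apply: Rmult_le_pos; [lra | apply: Rlt_le; apply: Rinv_0_lt_compat].
  by apply: (Rmult_le_reg_r (INR n.-1)); rewrite // /Rdiv Rmult_assoc Rinv_l; lra.
Qed.

Lemma ar_le_ge1 n (J : mechanism n) c : (2 <= n)%N -> is_mechanism J -> 1 <= c ->
  ar_le J c.
Proof.
move=> n_ge2 mechJ c_ge1 eps eps_gt0; have [u Vu] := exists_in_Vn n_ge2.
by exists u; split=> //; have := ratio_le1 (ltnW n_ge2) mechJ Vu; lra.
Qed.

Lemma ar_le_16_div_sqrt n : (2 <= n)%N -> forall J : mechanism n,
  is_mechanism J -> truthful_in_expectation J -> ar_le J (16 / sqrt (INR n)).
Proof.
move=> n_ge2 J mechJ truthJ.
have [k2_le_n n_lt] := Nat.sqrt_spec n (Nat.le_0_l n); set k := Nat.sqrt n in k2_le_n n_lt.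
have n_gt0 : 0 < INR n by apply: lt_0_INR; apply/ltP; lia.
have sqrt_gt0 : 0 < sqrt (INR n) by apply: sqrt_lt_R0.
case: (leqP 16 k) => [k_ge16 | k_lt16]; last first.
  apply: ar_le_ge1 => //; apply: (Rmult_le_reg_r (sqrt (INR n))) => //.
  rewrite /Rdiv Rmult_assoc Rinv_l; last lra.
  have n_le : INR n <= 256 by rewrite INR_IZR_INZ; apply: IZR_le; nia.
  have : sqrt (INR n) <= 16 by rewrite -(sqrt_square 16); [apply: sqrt_le_1_alt | ]; lra.
  lra.
move=> eps eps_gt0; apply: NNPP => no_u.
have ratioJ v : in_Vn v -> 16 / sqrt (INR n) <= ratio J v.
  by move=> Vv; apply: Rnot_lt_le => lt_v; apply: no_u; exists v; split=> //; lra.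
have k_ge2 : (2 <= k)%N by lia.
have n_large : (2 * k + 2 <= n)%N by nia.
have c_ge0 : 0 <= 16 / sqrt (INR n).
  by apply: Rmult_le_pos; [lra | apply: Rlt_le; apply: Rinv_0_lt_compat].
have := truthful_ratio_bound k_ge2 n_large mechJ truthJ c_ge0 ratioJ.
have K_ge16 : 16 <= INR k by rewrite INR_IZR_INZ; apply: IZR_le; lia.
have K2_le : INR k * INR k <= INR n by rewrite -mult_INR; apply: le_INR.
have sqrt_lt : sqrt (INR n) < INR k + 1.
  rewrite -(sqrt_square (INR k + 1)); last lra.
  by apply: sqrt_lt_1_alt; split; [lra | rewrite -S_INR -mult_INR; apply: lt_INR].
have := hard_gap K_ge16 K2_le sqrt_lt; lra.
Qed.

Theorem lemma6 :
  (exists C : R, 0 < C /\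
     forall (n : nat), (2 <= n)%N ->
       forall J : mechanism n, is_mechanism J -> truthful_in_expectation J ->
         ar_le J (C / sqrt (INR n))) /\
  (forall (n : nat), (2 <= n)%N ->
     forall J : mechanism n, is_mechanism J -> truthful_in_expectation J ->
       ar_le J (16 / sqrt (INR n))).
Proof.
split; last exact: ar_le_16_div_sqrt.
by exists 16; split; [lra | exact: ar_le_16_div_sqrt].
Qed.
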